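(* Let $\mathcal{H}^c_{A_{n-1}}$ be the degenerate affine Hecke–Clifford algebra of type $A_{n-1}$. If $\lambda$ is a partition of $n$ having at least one even part and $w\in S_n$ has cycle type $\lambda$, then $w\in[\mathcal{H}^c_{A_{n-1}},\mathcal{H}^c_{A_{n-1}}]$.
   Context: $\mathcal{H}^c_{A_{n-1}}$ (parameter $u\in\mathbb{C}$) is the $\mathbb{C}$-algebra generated by commuting $x_1,\dots,x_n$, Clifford generators $c_1,\dots,c_n$ ($c_i^2=1$, $c_ic_j=-c_jc_i$ for $i\ne j$) and $S_n$ (simple reflections $s_i=(i,i+1)$), with $\mathbb{C}[x]$, the Clifford algebra and $\mathbb{C}S_n$ subalgebras and relations $x_ic_i=-c_ix_i$, $x_ic_j=c_jx_i$ ($i\ne j$), $\sigma c_i=c_{\sigma(i)}\sigma$ ($\sigma\in S_n$), $x_{i+1}s_i-s_ix_i=u(1-c_{i+1}c_i)$, $x_js_i=s_ix_j$ ($j\ne i,i+1$). $[H,H]$ is the linear span of all $hh'-h'h$. *)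

From HB Require Import structures.
From mathcomp Require Import all_boot all_order all_algebra all_fingroup.
From mathcomp Require Import complex.
From mathcomp Require Import Rstruct.
From Stdlib Require Rdefinitions.
Set Implicit Arguments. Unset Strict Implicit. Unset Printing Implicit Defensive.
Import Order.TTheory GRing.Theory Num.Theory.
Local Open Scope ring_scope.

Definition CC_fieldType : fieldType := (Rdefinitions.R)[i].

(* Generators of the free algebra: x_i | c_i | g_sigma (sigma in S_n).
   (Indices 'I_n stand for 1..n.) *)
Definition gen (n : nat) := ('I_n + 'I_n + {perm 'I_n})%type.
Definition gX n (i : 'I_n) : gen n := inl (inl i).
Definition gC n (i : 'I_n) : gen n := inl (inr i).
Definition gS n (s : {perm 'I_n}) : gen n := inr s.

(* Words = monomials of the free associative algebra C<gen n>. *)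
Definition word n := seq (gen n).

Definition fsum n := seq (CC_fieldType * word n).

(* coefficient of a word in a formal sum; two formal sums are equal
   in the free algebra iff all their coefficients agree *)
Definition coef n (p : fsum n) (w : word n) : CC_fieldType :=
  \sum_(t <- p) (if t.2 == w then t.1 else 0).

Definition fs_word n (w : word n) : fsum n := [:: (1, w)].
Definition fs_scale n (a : CC_fieldType) (p : fsum n) : fsum n :=
  [seq (a * t.1, t.2) | t <- p].
Definition fs_add n (p q : fsum n) : fsum n := p ++ q.
Definition fs_sub n (p q : fsum n) : fsum n := p ++ fs_scale (-1) q.
Definition fs_mul n (p q : fsum n) : fsum n :=
  [seq (s.1 * t.1, s.2 ++ t.2) | s <- p, t <- q].
Definition fs_one n : fsum n := fs_word [::].

Definition sref n (i : 'I_n) (j : 'I_n) : {perm 'I_n} := tperm i j.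

Inductive hc_rel (n : nat) (u : CC_fieldType) : fsum n -> Prop :=
  | R_xx (i j : 'I_n) :
      hc_rel u (fs_sub (fs_word [:: gX i; gX j]) (fs_word [:: gX j; gX i]))
  | R_cc (i : 'I_n) :
      hc_rel u (fs_sub (fs_word [:: gC i; gC i]) (fs_one n))
  | R_cac (i j : 'I_n) : i != j ->
      hc_rel u (fs_add (fs_word [:: gC i; gC j]) (fs_word [:: gC j; gC i]))
  (* group algebra C S_n: g_1 = 1, g_s g_t = g_{s o t} (s o t = t * s in mathcomp) *)
  | R_g1 : hc_rel u (fs_sub (fs_word [:: gS 1]) (fs_one n))
  | R_gg (s t : {perm 'I_n}) :
      hc_rel u (fs_sub (fs_word [:: gS s; gS t]) (fs_word [:: gS (t * s)%g]))
  | R_xc (i : 'I_n) :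
      hc_rel u (fs_add (fs_word [:: gX i; gC i]) (fs_word [:: gC i; gX i]))
  | R_xcc (i j : 'I_n) : i != j ->
      hc_rel u (fs_sub (fs_word [:: gX i; gC j]) (fs_word [:: gC j; gX i]))
  | R_gc (s : {perm 'I_n}) (i : 'I_n) :
      hc_rel u (fs_sub (fs_word [:: gS s; gC i]) (fs_word [:: gC (s i); gS s]))
  | R_xs (i j : 'I_n) : (val j = (val i).+1)%N ->
      hc_rel u (fs_sub
        (fs_sub (fs_word [:: gX j; gS (sref i j)]) (fs_word [:: gS (sref i j); gX i]))
        (fs_scale u (fs_sub (fs_one n) (fs_word [:: gC j; gC i]))))
  | R_xsk (i j k : 'I_n) : (val j = (val i).+1)%N -> k != i -> k != j ->
      hc_rel u (fs_sub (fs_word [:: gX k; gS (sref i j)]) (fs_word [:: gS (sref i j); gX k])).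

(* An element of a formal sum of: commutators [a,b] of monomials (these span
   the commutator subspace of the free algebra, by bilinearity), and elements
   a r b of the two-sided ideal generated by the relations. *)
Definition comm_part n (cs : seq (CC_fieldType * word n * word n)) : fsum n :=
  flatten [seq fs_scale t.1.1
             (fs_sub (fs_word (t.1.2 ++ t.2)) (fs_word (t.2 ++ t.1.2))) | t <- cs].
Definition ideal_part n (ids : seq (CC_fieldType * word n * fsum n * word n)) : fsum n :=
  flatten [seq fs_scale t.1.1.1
             (fs_mul (fs_mul (fs_word t.1.1.2) t.1.2) (fs_word t.2)) | t <- ids].

(* For p in the free algebra, its image in H = F / I lies in [H,H]
   iff p lies in [F,F] + I. *)
Definition in_HC_commutator (n : nat) (u : CC_fieldType) (p : fsum n) : Prop :=
  exists (cs : seq (CC_fieldType * word n * word n))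
         (ids : seq (CC_fieldType * word n * fsum n * word n)),
    (forall t, t \in ids -> hc_rel u t.1.2) /\
    forall w : word n, coef p w = coef (comm_part cs) w + coef (ideal_part ids) w.

Definition is_partition_of (n : nat) (l : seq nat) : Prop :=
  [/\ sorted geq l, all (fun k => 0 < k)%N l & sumn l = n].

Definition cycle_type n (w : {perm 'I_n}) : seq nat :=
  sort geq [seq #|C| | C : {set 'I_n} in porbits w].

(* Let x be a point on an even cycle (x, w x, ..., w^(k-1) x) of w, and put
   P := c_x c_(w x) ... c_(w^(k-1) x) and R := its reverse, so R P = P R = 1.
   Pushing w through R relabels it by w, which moves c_x from the back of R to
   the front; moving it back past the k - 1 other generators costs the sign
   (-1)^(k-1) = -1, hence P w R = -w while w R P = w. So the commutator
   [P, w R] equals -2 w. *)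
From HB Require Import structures.
From mathcomp Require Import all_boot all_order all_algebra all_fingroup.
From mathcomp Require Import complex Rstruct.
From Stdlib Require Rdefinitions.
From mathcomp Require Import ring.
Set Implicit Arguments. Unset Strict Implicit. Unset Printing Implicit Defensive.
Import Order.TTheory GRing.Theory Num.Theory.
Local Open Scope ring_scope.

Section FormalSums.
Variable n : nat.
Implicit Types (p q : fsum n) (a b v : word n).

Lemma coef_cat p q v : coef (p ++ q) v = coef p v + coef q v.
Proof. by rewrite /coef big_cat. Qed.

Lemma coef_nil v : coef ([::] : fsum n) v = 0.
Proof. by rewrite /coef big_nil. Qed.

Lemma coef_scale c p v : coef (fs_scale c p) v = c * coef p v.
Proof.
rewrite /coef big_map mulr_sumr; apply: eq_bigr => t _ /=.
by case: ifP; rewrite ?mulr0.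
Qed.

Lemma coef_sub p q v : coef (fs_sub p q) v = coef p v - coef q v.
Proof. by rewrite /fs_sub coef_cat coef_scale mulN1r. Qed.

Lemma coef_flatten (ps : seq (fsum n)) v :
  coef (flatten ps) v = \sum_(p <- ps) coef p v.
Proof.
elim: ps => [|p ps IH]; first by rewrite big_nil coef_nil.
by rewrite /= coef_cat IH big_cons.
Qed.

Definition fs_wrap a b p : fsum n := [seq (t.1, a ++ t.2 ++ b) | t <- p].

(* The only candidate middle factor y of v = a y b. *)
Definition unwrap a b v : word n := take (size v - size a - size b) (drop (size a) v).

Lemma cat_wrap_eq a b y v :
  (a ++ y ++ b == v) = (y == unwrap a b v) && (a ++ unwrap a b v ++ b == v).
Proof.
case: (boolP (a ++ y ++ b == v)) => [/eqP <-|Hv].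
  rewrite /unwrap drop_size_cat // !size_cat addKn addnK take_size_cat //.
  by rewrite !eqxx.
by case: eqP => // Ey; rewrite -Ey (negbTE Hv).
Qed.

Lemma coef_wrap a b p v :
  coef (fs_wrap a b p) v =
  if a ++ unwrap a b v ++ b == v then coef p (unwrap a b v) else 0.
Proof.
rewrite /coef big_map; case: ifP => Hv.
  by apply: eq_bigr => t _ /=; rewrite cat_wrap_eq Hv andbT.
by rewrite big1 // => t _ /=; rewrite cat_wrap_eq Hv andbF.
Qed.

Lemma fs_wrapA a b a' b' p :
  fs_wrap a b (fs_wrap a' b' p) = fs_wrap (a ++ a') (b' ++ b) p.
Proof. by rewrite /fs_wrap -map_comp; apply: eq_map => t /=; rewrite !catA. Qed.

Lemma fs_wrap_scale a b c p : fs_wrap a b (fs_scale c p) = fs_scale c (fs_wrap a b p).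
Proof. by rewrite /fs_wrap /fs_scale -!map_comp. Qed.

Lemma fs_wrap_sub a b p q :
  fs_wrap a b (fs_sub p q) = fs_sub (fs_wrap a b p) (fs_wrap a b q).
Proof. by rewrite /fs_wrap /fs_sub /fs_scale map_cat -!map_comp. Qed.

Lemma fs_mul_words a b p :
  fs_mul (fs_mul (fs_word a) p) (fs_word b) = fs_wrap a b p.
Proof.
rewrite /fs_mul /fs_word /= cats0.
by elim: p => [|t p IH] //=; rewrite mul1r mulr1 -catA IH.
Qed.

End FormalSums.

Section RelationIdeal.
Variables (n : nat) (u : CC_fieldType).
Implicit Types (p q r : fsum n) (a b v : word n).

Lemma coef_ideal_part (ids : seq (CC_fieldType * word n * fsum n * word n)) v :
  coef (ideal_part ids) v =
  \sum_(t <- ids) t.1.1.1 * coef (fs_wrap t.1.1.2 t.2 t.1.2) v.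
Proof.
rewrite /ideal_part coef_flatten big_map; apply: eq_bigr => t _.
by rewrite coef_scale fs_mul_words.
Qed.

Definition in_rel_ideal p := exists ids : seq (CC_fieldType * word n * fsum n * word n),
  (forall t, t \in ids -> hc_rel u t.1.2) /\ coef p =1 coef (ideal_part ids).

Lemma in_rel_ideal_eq p q : coef p =1 coef q -> in_rel_ideal p -> in_rel_ideal q.
Proof. by move=> Epq [ids [Hids E]]; exists ids; split=> // v; rewrite -Epq. Qed.

Lemma in_rel_ideal_nil : in_rel_ideal [::].
Proof. by exists [::]. Qed.

Lemma in_rel_ideal_cat p q : in_rel_ideal p -> in_rel_ideal q -> in_rel_ideal (p ++ q).
Proof.
move=> [i1 [H1 E1]] [i2 [H2 E2]]; exists (i1 ++ i2); split.
  by move=> t; rewrite mem_cat => /orP[/H1|/H2].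
by move=> v; rewrite coef_cat E1 E2 !coef_ideal_part big_cat.
Qed.

Lemma in_rel_ideal_scale c p : in_rel_ideal p -> in_rel_ideal (fs_scale c p).
Proof.
move=> [ids [Hids E]].
exists [seq (c * t.1.1.1, t.1.1.2, t.1.2, t.2) | t <- ids]; split.
  by move=> t /mapP [t' /Hids Ht' ->].
move=> v; rewrite coef_scale E !coef_ideal_part big_map mulr_sumr.
by apply: eq_bigr => t _; rewrite mulrA.
Qed.

Lemma in_rel_ideal_rel r : hc_rel u r -> in_rel_ideal r.
Proof.
move=> Hr; exists [:: (1, [::], r, [::])]; split.
  by move=> t; rewrite inE => /eqP ->.
move=> v; rewrite coef_ideal_part big_seq1 mul1r coef_wrap /unwrap /=.
by rewrite cats0 !subn0 drop0 take_size eqxx.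
Qed.

Lemma in_rel_ideal_wrap a b p : in_rel_ideal p -> in_rel_ideal (fs_wrap a b p).
Proof.
move=> [ids [Hids E]].
exists [seq (t.1.1.1, a ++ t.1.1.2, t.1.2, t.2 ++ b) | t <- ids]; split.
  by move=> t /mapP [t' /Hids Ht' ->].
move=> v; rewrite coef_wrap E !coef_ideal_part big_map.
under [RHS]eq_bigr => t _ do rewrite /= -fs_wrapA coef_wrap.
by case: ifP => // _; rewrite big1 // => t _; rewrite mulr0.
Qed.

Definition hc_congr p q := in_rel_ideal (fs_sub p q).

Lemma hc_congr_eq p p' q q' :
  coef p =1 coef p' -> coef q =1 coef q' -> hc_congr p q -> hc_congr p' q'.
Proof. by move=> Ep Eq; apply: in_rel_ideal_eq => v; rewrite !coef_sub Ep Eq. Qed.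

Lemma hc_congr_refl p : hc_congr p p.
Proof.
by apply: in_rel_ideal_eq in_rel_ideal_nil => v; rewrite coef_sub coef_nil subrr.
Qed.

Lemma hc_congr_sym p q : hc_congr p q -> hc_congr q p.
Proof.
move/(in_rel_ideal_scale (-1)); apply: in_rel_ideal_eq => v.
by rewrite coef_scale !coef_sub mulN1r opprB.
Qed.

Lemma hc_congr_trans p q r : hc_congr p q -> hc_congr q r -> hc_congr p r.
Proof.
move=> Hpq Hqr; apply: in_rel_ideal_eq (in_rel_ideal_cat Hpq Hqr) => v.
by rewrite coef_cat !coef_sub addrA subrK.
Qed.

Lemma hc_congr_scale c p q : hc_congr p q -> hc_congr (fs_scale c p) (fs_scale c q).
Proof.
move/(in_rel_ideal_scale c); apply: in_rel_ideal_eq => v.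
by rewrite coef_scale !coef_sub !coef_scale mulrBr.
Qed.

Lemma hc_congr_sub p p' q q' :
  hc_congr p p' -> hc_congr q q' -> hc_congr (fs_sub p q) (fs_sub p' q').
Proof.
move=> Hp /(hc_congr_scale (-1)) Hq.
apply: in_rel_ideal_eq (in_rel_ideal_cat Hp Hq) => v.
rewrite coef_cat !coef_sub !coef_scale; ring.
Qed.

Lemma hc_congr_wrap a b p q : hc_congr p q -> hc_congr (fs_wrap a b p) (fs_wrap a b q).
Proof. by move/(in_rel_ideal_wrap a b); rewrite /hc_congr fs_wrap_sub. Qed.

Lemma hc_congr_word_wrap_scale a b v v' c :
  hc_congr (fs_word v) (fs_scale c (fs_word v')) ->
  hc_congr (fs_word (a ++ v ++ b)) (fs_scale c (fs_word (a ++ v' ++ b))).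
Proof. by move/(hc_congr_wrap a b); rewrite fs_wrap_scale. Qed.

Lemma hc_congr_scale1 p : hc_congr p (fs_scale 1 p).
Proof. by apply: hc_congr_eq (hc_congr_refl p) => // v; rewrite coef_scale mul1r. Qed.

Lemma hc_congr_word_wrap a b v v' :
  hc_congr (fs_word v) (fs_word v') ->
  hc_congr (fs_word (a ++ v ++ b)) (fs_word (a ++ v' ++ b)).
Proof. exact: hc_congr_wrap. Qed.

Lemma in_HC_commutator_congr p c a b :
  hc_congr p (fs_scale c (fs_sub (fs_word (a ++ b)) (fs_word (b ++ a)))) ->
  in_HC_commutator u p.
Proof.
move=> [ids [Hids E]]; exists [:: (c, a, b)], ids; split => // v.
by rewrite -E coef_sub /comm_part /= subrKC.
Qed.

End RelationIdeal.

Section CliffordWords.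
Variables (n : nat) (u : CC_fieldType).

Definition cliff_word (s : seq 'I_n) : word n := [seq gC i | i <- s].

Lemma cliff_word_rev (s : seq 'I_n) :
  hc_congr u (fs_word (cliff_word s ++ cliff_word (rev s))) (fs_word [::]).
Proof.
elim: s => [|a s IH]; first exact: hc_congr_refl.
have -> : cliff_word (a :: s) ++ cliff_word (rev (a :: s)) =
          [:: gC a] ++ (cliff_word s ++ cliff_word (rev s)) ++ [:: gC a].
  by rewrite /cliff_word rev_cons map_rcons -cats1 /= catA.
apply: hc_congr_trans (hc_congr_word_wrap [:: gC a] [:: gC a] IH) _.
exact: in_rel_ideal_rel (R_cc u a).
Qed.

Lemma perm_cliff_word (w : {perm 'I_n}) (s : seq 'I_n) (t : word n) :
  hc_congr u (fs_word (gS w :: cliff_word s ++ t))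
             (fs_word (cliff_word (map w s) ++ gS w :: t)).
Proof.
elim: s => [|a s IH]; first exact: hc_congr_refl.
have Hgc := hc_congr_word_wrap [::] (cliff_word s ++ t) (in_rel_ideal_rel (R_gc u w a)).
have Hs := hc_congr_word_wrap [:: gC (w a)] [::] IH.
rewrite /= !cats0 in Hgc Hs.
exact: hc_congr_trans Hgc Hs.
Qed.

Lemma cliff_anticomm (a b : 'I_n) : a != b ->
  hc_congr u (fs_word [:: gC a; gC b]) (fs_scale (-1) (fs_word [:: gC b; gC a])).
Proof.
move=> ab; apply: in_rel_ideal_eq (in_rel_ideal_rel (R_cac u ab)) => v.
by rewrite coef_sub coef_cat !coef_scale mulN1r opprK.
Qed.

Lemma cliff_anticomm_word (a : 'I_n) (s : seq 'I_n) (t : word n) : a \notin s ->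
  hc_congr u (fs_word (gC a :: cliff_word s ++ t))
             (fs_scale ((-1) ^+ size s) (fs_word (cliff_word s ++ gC a :: t))).
Proof.
elim: s => [|b s IH]; first by rewrite expr0 => _; exact: hc_congr_scale1.
rewrite inE negb_or => /andP [ab /IH {}IH].
have Hab := hc_congr_word_wrap_scale [::] (cliff_word s ++ t) (cliff_anticomm ab).
have Hs := hc_congr_scale (-1) (hc_congr_word_wrap_scale [:: gC b] [::] IH).
rewrite !cats0 in Hs.
apply: hc_congr_trans Hab (hc_congr_eq _ _ Hs) => // v.
by rewrite !coef_scale mulrA -exprS.
Qed.

Lemma cycle_word_conj (w : {perm 'I_n}) (x : 'I_n) (s' : seq 'I_n) :
  x \notin s' -> map w (x :: s') = rcons s' x ->
  hc_congr u (fs_word (cliff_word (x :: s') ++ gS w :: cliff_word (rev (x :: s'))))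
             (fs_scale ((-1) ^+ size s') (fs_word [:: gS w])).
Proof.
move=> xs' Hcyc; set P := cliff_word (x :: s').
have Hperm := perm_cliff_word w (rev (x :: s')) [::].
rewrite cats0 map_rev Hcyc rev_rcons in Hperm.
have Hx := @cliff_anticomm_word x (rev s') [:: gS w].
rewrite size_rev mem_rev in Hx.
have Hconj := hc_congr_word_wrap_scale P [::] (hc_congr_trans Hperm (Hx xs')).
have Hcancel := hc_congr_scale ((-1) ^+ size s')
                  (hc_congr_word_wrap [::] [:: gS w] (cliff_word_rev (x :: s'))).
rewrite !cats0 in Hconj; apply: hc_congr_trans Hconj (hc_congr_eq _ _ Hcancel) => // v.
by rewrite /P rev_cons /cliff_word map_rcons -cats1 -!catA.
Qed.

Lemma perm_word_cancel (w : {perm 'I_n}) (s : seq 'I_n) :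
  hc_congr u (fs_word ((gS w :: cliff_word (rev s)) ++ cliff_word s))
             (fs_word [:: gS w]).
Proof.
have H := hc_congr_word_wrap [:: gS w] [::] (cliff_word_rev (rev s)).
by rewrite revK /= !cats0 in H.
Qed.

End CliffordWords.

Lemma map_traject (T : Type) (f : T -> T) x m :
  map f (traject f x m) = traject f (f x) m.
Proof. by elim: m x => [|m IH] x //=; rewrite IH. Qed.

Lemma even_porbit_of_cycle_type n (lambda : seq nat) (w : {perm 'I_n}) :
  has (fun k => ~~ odd k) lambda -> cycle_type w = lambda ->
  exists x, ~~ odd #|porbit w x|.
Proof.
move=> /hasP [m Hm Hodd] Hct; rewrite -Hct /cycle_type mem_sort in Hm.
case/mapP: Hm => C; rewrite mem_enum => /imsetP [x _ ->] Em.
by exists x; rewrite -Em.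
Qed.

Lemma porbit_traject n (w : {perm 'I_n}) x :
  exists s', [/\ x \notin s', map w (x :: s') = rcons s' x
                & #|porbit w x| = (size s').+1].
Proof.
have := uniq_traject_porbit w x; have := iter_porbit w x.
case: #|porbit w x| (card_porbit_neq0 w x) => [//|k] _ Hiter /=.
case/andP=> Hx _; exists (traject w (w x) k); split => //; last by rewrite size_traject.
by rewrite map_traject -/(traject w (w x) k.+1) trajectSr -iterSr Hiter.
Qed.

Theorem proposition3p3p1 (n : nat) (u : CC_fieldType) (lambda : seq nat)
    (w : {perm 'I_n}) :
  is_partition_of n lambda ->
  has (fun k => ~~ odd k) lambda ->
  cycle_type w = lambda ->
  in_HC_commutator u (fs_word [:: gS w]).
Proof.
move=> _ Heven Hct; have [x Hx] := even_porbit_of_cycle_type Heven Hct.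
have [s' [Hxs' Hcyc Hsize]] := porbit_traject w x.
have Hsign : (-1) ^+ size s' = -1 :> CC_fieldType.
  by rewrite -signr_odd; move: Hx; rewrite Hsize /= => /negbNE ->.
have Hcomm := hc_congr_sub (cycle_word_conj u Hxs' Hcyc) (perm_word_cancel u w (x :: s')).
rewrite Hsign in Hcomm.
apply: (in_HC_commutator_congr (c := - 2^-1)); apply: hc_congr_sym.
apply: hc_congr_eq (hc_congr_scale (- 2^-1) Hcomm) => // v.
have h2 : (2%:R : CC_fieldType) != 0.
  by change ((2%:R : (Rdefinitions.R)[i]) != 0); rewrite pnatr_eq0.
by rewrite coef_scale coef_sub coef_scale; field.
Qed.
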